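(* Let $z\in\mathcal N_h^I$ and let $\varphi$ be a quadratic polynomial on $\mathbb R^d$. If $\varphi$ has no strict local maximum in $B_\varepsilon(z)$, then $$-\Delta^\diamond_{\infty,\mathfrak h}\varphi(z)\ge-\lambda_{\max}(D^2\varphi)-C\Big(\frac{h^2}{\varepsilon^2}+\theta^2\Big),$$ where $C$ depends on $d$, $D^2\varphi$, and the shape regularity constant of $\mathcal T_h$.
   Context: Setting: $\Omega\subset\mathbb R^d$ ($d\ge1$) is a bounded domain with continuous boundary. For $r>0$, $\Omega^{(r)}=\{x\in\Omega:\operatorname{dist}(x,\partial\Omega)>r\}$. $\mathcal T_h$ is a shape-regular mesh of closed simplices, $h=\max_T\operatorname{diam}T$, $\Omega_h$ the interior of the union of the simplices, with $\Omega^{(h)}\subset\Omega_h\subset\Omega$; $\mathcal N_h$ the set of vertices. $\mathcal I_h$ is the Lagrange interpolant onto continuous piecewise linear functions on $\mathcal T_h$. Parameters $\mathfrak h=(h,\varepsilon,\theta)$, $\varepsilon\in[h,\operatorname{diam}\Omega]$, $0<\theta\le1$. $\mathcal N_h^I=\mathcal N_h\cap\Omega^{(2\varepsilon)}$. $\mathbb S_\theta$: finite symmetric subset of the unit sphere $\mathbb S$ such that each $v\in\mathbb S$ has $v_\theta\in\mathbb S_\theta$ with $|v-v_\theta|\le\theta$. For $z\in\mathcal N_h^I$: $\mathcal N_{\mathfrak h}(z)=\{z\}\cup\{z+\varepsilon v_\theta:v_\theta\in\mathbb S_\theta\}$, and for $w\in C(\overline\Omega)$, $-\Delta^\diamond_{\infty,\mathfrak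 h}w(z)=\varepsilon^{-2}\big(2w(z)-\max_{x\in\mathcal N_{\mathfrak h}(z)}\mathcal I_hw(x)-\min_{x\in\mathcal N_{\mathfrak h}(z)}\mathcal I_hw(x)\big)$. $B_\varepsilon(z)$ is the open Euclidean ball; $\lambda_{\max}$ is the largest eigenvalue. *)

From HB Require Import structures.
From mathcomp Require Import all_boot all_order all_algebra.
From mathcomp Require Import all_classical all_reals all_analysis.

Set Implicit Arguments.
Unset Strict Implicit.
Unset Printing Implicit Defensive.

Import Order.TTheory GRing.Theory Num.Theory.
Import numFieldNormedType.Exports.
Local Open Scope classical_set_scope.
Local Open Scope ring_scope.

Section Defs.
Variables (R : realType) (d : nat).
Local Notation pt := 'rV[R]_d.

Definition dotp (x y : pt) : R := (x *m y^T) 0 0.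
Definition enorm (x : pt) : R := Num.sqrt (dotp x x).

Definition eball (c : pt) (r : R) : set pt := [set y | enorm (y - c) < r].

Definition edist_set (x : pt) (S : set pt) : R :=
  inf [set r | exists2 y, S y & r = enorm (x - y)].

Definition bdry (S : set pt) : set pt := closure S `\` interior S.

Definition inner_set (Om : set pt) (r : R) : set pt :=
  [set x | Om x /\ r < edist_set x (bdry Om)].

Definition diam_set (S : set pt) : R :=
  sup [set r | exists x y, [/\ S x, S y & r = enorm (x - y)]].

(* Bounded domain with continuous boundary: locally, in rotated coordinates
   (distinguished unit direction e), Omega is the subgraph of a continuous
   function of the remaining coordinates. *)
Definition continuous_boundary (Om : set pt) : Prop :=
  forall x, bdry Om x ->
  exists2 r, 0 < r &
  exists2 e : pt, enorm e = 1 &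
  exists g : pt -> R,
    [/\ continuous g,
        (forall y (t : R), g (y + t *: e) = g y) &
        Om `&` eball x r = [set y | eball x r y /\ dotp y e < g y]].

Definition bounded_domain_cont_bdry (Om : set pt) : Prop :=
  [/\ open Om, connected Om, (exists x, Om x),
      (exists M : R, forall x, Om x -> enorm x <= M) &
      continuous_boundary Om].

Definition chull (S : set pt) : set pt :=
  [set x | exists n (p : 'I_n -> pt) (l : 'I_n -> R),
     [/\ forall i, S (p i), forall i, 0 <= l i, \sum_i l i = 1 &
         x = \sum_i l i *: p i]].

Definition simplex (v : 'I_d.+1 -> pt) : set pt := chull (range v).

Definition affine_indep (v : 'I_d.+1 -> pt) : Prop :=
  forall l : 'I_d.+1 -> R, \sum_i l i = 0 -> \sum_i l i *: v i = 0 ->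
    forall i, l i = 0.

Definition inradius (S : set pt) : R :=
  sup [set r | 0 < r /\ exists c, eball c r `<=` S].

(* A mesh with m simplices: M j i is the i-th vertex of the j-th simplex.
   Nondegenerate simplices, conforming (two simplices meet in the convex
   hull of their common vertices, i.e. a common face or the empty set). *)
Definition is_mesh m (M : 'I_m -> 'I_d.+1 -> pt) : Prop :=
  (forall j, affine_indep (M j)) /\
  (forall j k, simplex (M j) `&` simplex (M k) =
               chull (range (M j) `&` range (M k))).

Definition shape_regular m (sigma : R) (M : 'I_m -> 'I_d.+1 -> pt) : Prop :=
  forall j, diam_set (simplex (M j)) <= sigma * inradius (simplex (M j)).

Definition meshsize m (M : 'I_m -> 'I_d.+1 -> pt) : R :=
  \big[Num.max/0]_(j < m) diam_set (simplex (M j)).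

Definition mesh_domain m (M : 'I_m -> 'I_d.+1 -> pt) : set pt :=
  interior (\bigcup_j simplex (M j)).

Definition nodes m (M : 'I_m -> 'I_d.+1 -> pt) : set pt :=
  [set x | exists j i, M j i = x].

(* Lagrange P1 interpolant: on a simplex T containing x, with barycentric
   coordinates l of x, I_h w (x) = sum_i l_i w(v_i) (well defined by
   conformity and nondegeneracy; value 0 outside the mesh). *)
Definition interp m (M : 'I_m -> 'I_d.+1 -> pt) (w : pt -> R) (x : pt) : R :=
  xget 0 [set y | exists j (l : 'I_d.+1 -> R),
     [/\ forall i, 0 <= l i, \sum_i l i = 1,
         x = \sum_i l i *: M j i & y = \sum_i l i * w (M j i)]].

Definition theta_net (theta : R) (S : seq pt) : Prop :=
  [/\ forall v, v \in S -> enorm v = 1,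
      forall v, v \in S -> - v \in S &
      forall v, enorm v = 1 -> exists2 vt, vt \in S & enorm (v - vt) <= theta].

Definition stencil (eps : R) (S : seq pt) (z : pt) : seq pt :=
  z :: [seq z + eps *: v | v <- S].

Definition neg_disc_inf_lap m (M : 'I_m -> 'I_d.+1 -> pt) (eps : R)
    (S : seq pt) (w : pt -> R) (z : pt) : R :=
  eps ^-2 * (2 * w z
    - \big[Num.max/interp M w z]_(x <- stencil eps S z) interp M w x
    - \big[Num.min/interp M w z]_(x <- stencil eps S z) interp M w x).

Definition quad (A : 'M[R]_d) (b : pt) (c : R) (x : pt) : R :=
  2^-1 * dotp (x *m A) x + dotp b x + c.

Definition lambda_max (A : 'M[R]_d) : R := sup [set a | eigenvalue A a].

Definition strict_loc_max (f : pt -> R) (x : pt) : Prop :=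
  exists2 delta, 0 < delta &
    forall y, 0 < enorm (y - x) < delta -> f y < f x.

End Defs.

From HB Require Import structures.
From mathcomp Require Import all_boot all_order all_algebra.
From mathcomp Require Import all_classical all_reals all_analysis.
From mathcomp Require Import ring lra.

(* Let lam = lambda_max(A), A the Hessian of phi.  For w in S_theta the
   reflected point z - eps w is also in the stencil, and
   phi(z + eps w) + phi(z - eps w) = 2 phi(z) + eps^2 w A w^T <= 2 phi(z) + lam eps^2.
   The point z itself is paired with z when lam >= 0.  When lam < 0, phi is
   strictly concave and its critical point is a strict local maximum, hence
   lies outside B_eps(z); then |grad phi(z)| >= -lam eps, and the direction of
   S_theta closest to -grad phi(z) gives a stencil point where phi is at most
   phi(z) + lam eps^2 + |lam| theta^2 eps^2.  So max + min of phi over the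
   stencil is at most 2 phi(z) + lam eps^2 + |lam| theta^2 eps^2, and
   replacing phi by its P1 interpolant costs at most sum_ij |A_ij| h^2 / 2
   at each point. *)

Set Implicit Arguments.
Unset Strict Implicit.
Unset Printing Implicit Defensive.

Import Order.TTheory GRing.Theory Num.Theory.
Import numFieldNormedType.Exports.
Local Open Scope classical_set_scope.
Local Open Scope ring_scope.

Lemma quadratic_ge0_discr (R : realFieldType) (a b c : R) : 0 <= a ->
  (forall t, 0 <= a * t ^+ 2 + 2 * b * t + c) -> b ^+ 2 <= a * c.
Proof.
move=> a0 ge0; have [a_eq0|a_neq0] := eqVneq a 0.
  move: ge0; rewrite a_eq0 mul0r; have [->|b_neq0] := eqVneq b 0.
    by rewrite expr0n.
  move=> /(_ (- (c + 1) / (2 * b))).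
  have -> : 0 * (- (c + 1) / (2 * b)) ^+ 2 + 2 * b * (- (c + 1) / (2 * b)) + c = -1.
    by field.
  lra.
have a_gt0 : 0 < a by rewrite lt_neqAle eq_sym a_neq0.
have := ge0 (- b / a).
have -> : a * (- b / a) ^+ 2 + 2 * b * (- b / a) + c = c - b ^+ 2 / a by field.
by rewrite subr_ge0 ler_pdivrMr // mulrC.
Qed.

Lemma convex_comb_le (R : numDomainType) (I : finType) (l F : I -> R) B :
  (forall i, 0 <= l i) -> \sum_i l i = 1 -> (forall i, F i <= B) ->
  \sum_i l i * F i <= B.
Proof.
move=> l_ge0 l_sum1 F_le; apply: (@le_trans _ _ (\sum_i l i * B)).
  by apply: ler_sum => i _; rewrite ler_wpM2l.
by rewrite -mulr_suml l_sum1 mul1r.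
Qed.

Lemma sum_delta (K : pzSemiRingType) (T : finType) (i : T) :
  \sum_k ((k == i)%:R : K) = 1.
Proof. by rewrite (bigD1 i) //= eqxx big1 ?addr0 // => k /negbTE ->. Qed.

Lemma sum_deltaZ (K : pzRingType) (V : lmodType K) (T : finType) (F : T -> V) i :
  \sum_k ((k == i)%:R : K) *: F k = F i.
Proof.
by rewrite (bigD1 i) //= eqxx scale1r big1 ?addr0 // => k /negbTE ->; rewrite scale0r.
Qed.

Lemma convex_comb_subr (K : pzRingType) (V : lmodType K) (I : finType)
    (l : I -> K) (p : I -> V) y :
  \sum_i l i = 1 -> \sum_i l i *: p i - y = \sum_i l i *: (p i - y).
Proof.
move=> l_sum1; rewrite (eq_bigr _ (fun i _ => scalerBr _ _ _)) sumrB -scaler_suml.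
by rewrite l_sum1 scale1r.
Qed.

Lemma bigmax_add_bigmin_le (R : realDomainType) (T : eqType) (r : seq T)
    (F G : T -> R) x0 K E : x0 \in r ->
  (forall x, x \in r -> `|F x - G x| <= E) ->
  (forall x1, x1 \in r -> exists2 x2, x2 \in r & G x1 + G x2 <= K) ->
  \big[Num.max/F x0]_(x <- r) F x + \big[Num.min/F x0]_(x <- r) F x <= K + 2 * E.
Proof.
move=> x0r FG_close pair_le; set mn := \big[Num.min/F x0]_(x <- r) F x.
have F_le x1 : x1 \in r -> F x1 <= K + 2 * E - mn.
  move=> x1r; have [x2 x2r G_le] := pair_le x1 x1r.
  have mn_le : mn <= F x2 by exact: ge_bigmin_seq.
  move: (FG_close _ x1r) (FG_close _ x2r); rewrite !ler_norml; lra.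
by rewrite -lerBrDr big_seq bigmax_le ?F_le.
Qed.

Section Euclid.
Variables (R : realType) (d : nat).
Local Notation pt := 'rV[R]_d.
Implicit Types (x y w : pt) (A B : 'M[R]_d).

Lemma dotpE x y : dotp x y = \sum_k x 0 k * y 0 k.
Proof. by rewrite /dotp mxE; apply: eq_bigr => k _; rewrite mxE. Qed.

Lemma dotpC x y : dotp x y = dotp y x.
Proof. by rewrite !dotpE; apply: eq_bigr => k _; rewrite mulrC. Qed.

Lemma dotpDl x y w : dotp (x + y) w = dotp x w + dotp y w.
Proof. by rewrite !dotpE -big_split; apply: eq_bigr => k _; rewrite mxE mulrDl. Qed.

Lemma dotpZl a x w : dotp (a *: x) w = a * dotp x w.
Proof. by rewrite !dotpE mulr_sumr; apply: eq_bigr => k _; rewrite mxE mulrA. Qed.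

Lemma dotpNl x w : dotp (- x) w = - dotp x w.
Proof. by rewrite -scaleN1r dotpZl mulN1r. Qed.

Lemma dotpBl x y w : dotp (x - y) w = dotp x w - dotp y w.
Proof. by rewrite dotpDl dotpNl. Qed.

Lemma dotp0l x : dotp 0 x = 0.
Proof. by rewrite -(scale0r 0) dotpZl mul0r. Qed.

Lemma dotpDr x y w : dotp w (x + y) = dotp w x + dotp w y.
Proof. by rewrite dotpC dotpDl !(dotpC w). Qed.

Lemma dotpZr a x w : dotp w (a *: x) = a * dotp w x.
Proof. by rewrite dotpC dotpZl dotpC. Qed.

Lemma dotpNr x w : dotp w (- x) = - dotp w x.
Proof. by rewrite dotpC dotpNl dotpC. Qed.

Lemma dotpBr x y w : dotp w (x - y) = dotp w x - dotp w y.
Proof. by rewrite dotpDr dotpNr. Qed.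

Lemma dotp0r x : dotp x 0 = 0.
Proof. by rewrite dotpC dotp0l. Qed.

Lemma dotp_sumr (I : finType) (F : I -> pt) w :
  dotp w (\sum_i F i) = \sum_i dotp w (F i).
Proof.
elim/big_rec2: _ => [|i y1 y2 _ <-]; first by rewrite dotp0r.
by rewrite dotpDr.
Qed.

Lemma dotp_ge0 x : 0 <= dotp x x.
Proof. by rewrite dotpE sumr_ge0 // => k _; rewrite -expr2 sqr_ge0. Qed.

Lemma dotp_eq0 x : (dotp x x == 0) = (x == 0).
Proof.
apply/idP/idP => [|/eqP->]; last by rewrite dotp0l.
rewrite dotpE psumr_eq0 => [/allP x0|k _]; last by rewrite -expr2 sqr_ge0.
apply/eqP/rowP => k; rewrite [RHS]mxE.
by have := x0 k (mem_index_enum k); rewrite implyTb mulf_eq0 orbb => /eqP.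
Qed.

Lemma dotp_gt0 x : x != 0 -> 0 < dotp x x.
Proof. by move=> x_neq0; rewrite lt_neqAle eq_sym dotp_eq0 x_neq0 dotp_ge0. Qed.

Lemma dotp_mulmx_sym A x y : A^T = A -> dotp (x *m A) y = dotp x (y *m A).
Proof. by move=> symA; rewrite /dotp trmx_mul symA mulmxA. Qed.

Lemma dotp_mulmx_tr A w : dotp (w *m A) (w *m A) = dotp (w *m (A *m A^T)) w.
Proof. by rewrite /dotp trmx_mul !mulmxA. Qed.

Lemma coord_sqr_le_dotp x i : x 0 i ^+ 2 <= dotp x x.
Proof.
rewrite dotpE (bigD1 i) //= -expr2 lerDl.
by apply: sumr_ge0 => k _; rewrite -expr2 sqr_ge0.
Qed.

Lemma psd_cauchy_schwarz B : B^T = B -> (forall v : pt, 0 <= dotp (v *m B) v) ->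
  forall x y, dotp (x *m B) y ^+ 2 <= dotp (x *m B) x * dotp (y *m B) y.
Proof.
move=> symB psdB x y; rewrite mulrC; apply: quadratic_ge0_discr => // t.
have := psdB (x + t *: y).
rewrite mulmxDl -scalemxAl !(dotpDl, dotpDr, dotpZl, dotpZr).
rewrite [dotp (y *m B) x]dotp_mulmx_sym // (dotpC y).
by move/le_trans; apply; rewrite le_eqVlt; apply/orP; left; apply/eqP; ring.
Qed.

Lemma enorm_ge0 x : 0 <= enorm x.
Proof. exact: sqrtr_ge0. Qed.

Lemma enorm_sqr x : enorm x ^+ 2 = dotp x x.
Proof. by rewrite /enorm sqr_sqrtr // dotp_ge0. Qed.

Lemma enorm0 : enorm (0 : pt) = 0.
Proof. by rewrite /enorm dotp0l sqrtr0. Qed.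

Lemma enorm_gt0 x : x != 0 -> 0 < enorm x.
Proof. by move=> x_neq0; rewrite sqrtr_gt0 dotp_gt0. Qed.

Lemma enormZ a x : enorm (a *: x) = `|a| * enorm x.
Proof.
by rewrite /enorm dotpZl dotpZr mulrA -expr2 sqrtrM ?sqr_ge0 // sqrtr_sqr.
Qed.

Lemma enormN x : enorm (- x) = enorm x.
Proof. by rewrite -scaleN1r enormZ normrN1 mul1r. Qed.

Lemma enorm_distC x y : enorm (x - y) = enorm (y - x).
Proof. by rewrite -enormN opprB. Qed.

Lemma dotp_le_enorm x y : dotp x y <= enorm x * enorm y.
Proof.
apply: le_trans (ler_norm _) _.
rewrite -(@ler_pXn2r _ 2) ?nnegrE ?mulr_ge0 ?enorm_ge0 //.
rewrite exprMn !enorm_sqr real_normK ?num_real //.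
have := @psd_cauchy_schwarz 1%:M (trmx1 _ _) _ x y; rewrite !mulmx1; apply.
by move=> v; rewrite mulmx1 dotp_ge0.
Qed.

Lemma enormD x y : enorm (x + y) <= enorm x + enorm y.
Proof.
rewrite -(@ler_pXn2r _ 2) ?nnegrE ?addr_ge0 ?enorm_ge0 //.
rewrite enorm_sqr dotpDl !dotpDr (dotpC y x) sqrrD !enorm_sqr.
have := dotp_le_enorm x y; lra.
Qed.

Lemma enorm_sum (I : finType) (F : I -> pt) :
  enorm (\sum_i F i) <= \sum_i enorm (F i).
Proof.
elim/big_rec2: _ => [|i y1 y2 _ IH]; first by rewrite enorm0.
exact: le_trans (enormD _ _) (lerD (lexx _) IH).
Qed.

Lemma dotp_unit_vectors x y : enorm x = 1 -> enorm y = 1 ->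
  dotp x y = 1 - enorm (x - y) ^+ 2 / 2.
Proof.
move=> x1 y1; rewrite enorm_sqr dotpBl !dotpBr -!enorm_sqr x1 y1 (dotpC y x).
by rewrite expr1n; field.
Qed.

End Euclid.

Section Spectral.
Variables (R : realType) (d : nat).
Local Notation pt := 'rV[R]_d.
Implicit Types (v w : pt) (A B : 'M[R]_d).

Definition mx_abs_sum A : R := \sum_i \sum_j `|A i j|.

Lemma mx_abs_sum_ge0 A : 0 <= mx_abs_sum A.
Proof. by apply: sumr_ge0 => i _; apply: sumr_ge0. Qed.

Lemma abs_quad_form_le A v : `|dotp (v *m A) v| <= mx_abs_sum A * dotp v v.
Proof.
have -> : dotp (v *m A) v = \sum_i \sum_j v 0 i * A i j * v 0 j.
  rewrite dotpE exchange_big /=; apply: eq_bigr => j _.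
  by rewrite mxE mulr_suml; apply: eq_bigr.
rewrite /mx_abs_sum mulr_suml; apply: le_trans (ler_norm_sum _ _ _) _.
apply: ler_sum => i _; rewrite mulr_suml.
apply: le_trans (ler_norm_sum _ _ _) _; apply: ler_sum => j _.
rewrite !normrM (mulrC `|v 0 i|) -mulrA ler_wpM2l //.
have := coord_sqr_le_dotp v i; have := coord_sqr_le_dotp v j.
rewrite -(real_normK (num_real (v 0 i))) -(real_normK (num_real (v 0 j))).
have := sqr_ge0 (`|v 0 i| - `|v 0 j|); rewrite sqrrB; lra.
Qed.

Lemma quad_form_le A v : dotp (v *m A) v <= mx_abs_sum A * dotp v v.
Proof. exact: le_trans (ler_norm _) (abs_quad_form_le _ _). Qed.

(* Cauchy-Schwarz for the semi-inner product (x, y) |-> x B y^T, applied to v and vB. *)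
Lemma psd_mulmx_sqr_le B v : B^T = B -> (forall w, 0 <= dotp (w *m B) w) ->
  dotp (v *m B) (v *m B) <= mx_abs_sum B * dotp (v *m B) v.
Proof.
move=> symB psdB; set w := v *m B.
have w_ge0 := dotp_ge0 w; have vBv_ge0 := psdB v.
have [w0|w_neq0] := eqVneq (dotp w w) 0; first by rewrite w0 mulr_ge0 ?mx_abs_sum_ge0.
have w_gt0 : 0 < dotp w w by rewrite lt_neqAle eq_sym w_neq0.
have : dotp w w ^+ 2 <= dotp (v *m B) v * (mx_abs_sum B * dotp w w).
  exact: le_trans (psd_cauchy_schwarz symB psdB v w) (ler_wpM2l vBv_ge0 (quad_form_le B w)).
by rewrite expr2 mulrCA mulrA ler_pM2r.
Qed.

Lemma unitmx_dotp_le B v : B \in unitmx ->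
  dotp v v <= mx_abs_sum (invmx B *m (invmx B)^T) * dotp (v *m B) (v *m B).
Proof.
move=> unitB; have := quad_form_le (invmx B *m (invmx B)^T) (v *m B).
by rewrite -dotp_mulmx_tr mulmxK.
Qed.

Lemma psd_unitmx_coercive B : B^T = B -> (forall w, 0 <= dotp (w *m B) w) ->
  B \in unitmx -> exists2 k, 0 < k & forall v, k * dotp v v <= dotp (v *m B) v.
Proof.
move=> symB psdB unitB.
set K := mx_abs_sum (invmx B *m (invmx B)^T) * mx_abs_sum B.
have K_ge0 : 0 <= K by rewrite mulr_ge0 ?mx_abs_sum_ge0.
exists (K + 1)^-1 => [|v]; first by rewrite invr_gt0; lra.
rewrite mulrC ler_pdivrMr; last by lra.
apply: (le_trans (unitmx_dotp_le v unitB)).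
have := psd_mulmx_sqr_le v symB psdB; have := psdB v; rewrite /K.
have := mx_abs_sum_ge0 (invmx B *m (invmx B)^T); nra.
Qed.

Definition rayleigh_quotients A : set R :=
  [set r | exists2 v, v != 0 & r = dotp (v *m A) v / dotp v v].

Hypothesis d_gt0 : (0 < d)%N.

Lemma has_sup_rayleigh_quotients A : has_sup (rayleigh_quotients A).
Proof.
split.
  set o : pt := const_mx 1.
  have o_neq0 : o != 0.
    by apply/eqP => /rowP /(_ (Ordinal d_gt0)); rewrite !mxE => /eqP; rewrite oner_eq0.
  by exists (dotp (o *m A) o / dotp o o); exists o.
exists (mx_abs_sum A) => r [v v_neq0 ->].
by rewrite ler_pdivrMr ?dotp_gt0 // quad_form_le.
Qed.

Lemma quad_form_le_sup_rayleigh A v :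
  dotp (v *m A) v <= sup (rayleigh_quotients A) * dotp v v.
Proof.
have [->|v_neq0] := eqVneq v 0; first by rewrite mul0mx !dotp0l mulr0.
rewrite -ler_pdivrMr ?dotp_gt0 //.
by apply: sup_upper_bound; [exact: has_sup_rayleigh_quotients | exists v].
Qed.

(* mu I - A is positive semidefinite for mu the supremum of the Rayleigh
   quotients; if it were invertible it would be coercive, contradicting the
   choice of mu as a supremum. *)
Lemma sup_rayleigh_eigenvalue A : A^T = A -> eigenvalue A (sup (rayleigh_quotients A)).
Proof.
move=> symA; set mu := sup _; set B : 'M[R]_d := mu%:M - A.
have symB : B^T = B by rewrite /B linearB /= symA tr_scalar_mx.
have BE v : dotp (v *m B) v = mu * dotp v v - dotp (v *m A) v.
  by rewrite /B mulmxBr dotpBl mul_mx_scalar dotpZl.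
have psdB w : 0 <= dotp (w *m B) w.
  by rewrite BE subr_ge0 quad_form_le_sup_rayleigh.
apply/eigenvalueP.
have [/eqP kerB0|kerB_neq0] := eqVneq (kermx B) 0.
  have unitB : B \in unitmx by rewrite -row_free_unit -kermx_eq0 kerB0.
  have [k k_gt0 coerB] := psd_unitmx_coercive symB psdB unitB.
  have [_ [v v_neq0 ->] close] := sup_adherent k_gt0 (has_sup_rayleigh_quotients A).
  have : (mu - k) * dotp v v < dotp (v *m A) v by rewrite -ltr_pdivlMr ?dotp_gt0.
  have := coerB v; rewrite BE mulrBl; lra.
have [v /sub_kermxP vB0 v_neq0] := rowV0Pn kerB_neq0.
exists v => //; move: vB0; rewrite /B mulmxBr mul_mx_scalar => /eqP.
by rewrite subr_eq0 => /eqP <-.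
Qed.

Lemma lambda_max_sup_rayleigh A : A^T = A ->
  lambda_max A = sup (rayleigh_quotients A).
Proof.
move=> symA; have eig := sup_rayleigh_eigenvalue symA.
have eig_le a : eigenvalue A a -> a <= sup (rayleigh_quotients A).
  move=> /eigenvalueP [v vA v_neq0].
  by have := quad_form_le_sup_rayleigh A v; rewrite vA dotpZl ler_pM2r ?dotp_gt0.
apply/eqP; rewrite eq_le; apply/andP; split.
  by apply: ge_sup; [exists (sup (rayleigh_quotients A)) | exact: eig_le].
by apply: sup_upper_bound => //; split; exists (sup (rayleigh_quotients A)).
Qed.

Lemma quad_form_le_lambda_max A v : A^T = A ->
  dotp (v *m A) v <= lambda_max A * dotp v v.
Proof. by move=> symA; rewrite lambda_max_sup_rayleigh // quad_form_le_sup_rayleigh. Qed.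

Lemma lambda_max_lt0_unitmx A : A^T = A -> lambda_max A < 0 -> A \in unitmx.
Proof.
move=> symA neg; rewrite -row_free_unit -kermx_eq0; apply: contraT => kerA_neq0.
have [v /sub_kermxP vA0 v_neq0] := rowV0Pn kerA_neq0.
have := quad_form_le_lambda_max v symA; rewrite vA0 dotp0l.
by rewrite leNgt pmulr_llt0 ?dotp_gt0 // neg.
Qed.

End Spectral.

Section Domain.
Variables (R : realType) (d : nat).
Local Notation pt := 'rV[R]_d.
Implicit Types (Om : set pt) (x z w : pt).

(* The segment is connected and meets Om, and Om is relatively clopen in it
   since the segment does not meet the boundary. *)
Lemma open_segment_mem Om z w : open Om -> Om z ->
  (forall t : R, 0 <= t <= 1 -> ~ bdry Om (z + t *: w)) -> Om (z + w).
Proof.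
move=> openOm Omz no_bdry; set f := fun t : R => z + t *: w.
have f_cont : continuous f.
  by move=> t; apply: cvgD; [exact: cvg_cst | exact: scalel_continuous].
have seg_conn : connected (f @` `[0, 1]).
  apply: connected_continuous_connected; first exact: segment_connected.
  exact: continuous_subspaceT.
have f01 t : 0 <= t <= 1 -> (f @` `[0, 1]) (f t).
  by move=> t01; exists t => //; rewrite set_itvE.
have seg_sub : f @` `[0, 1] `&` Om = f @` `[0, 1].
  apply: seg_conn.
  - exists z; split; last exact: Omz.
    by rewrite -[z]addr0 -(scale0r w); apply: f01; rewrite lexx ler01.
  - by exists Om.
  - exists (closure Om); first exact: closed_closure.
    apply/seteqP; split => x [seg_x Om_x]; split => //; first exact: subset_closure.
    apply: contrapT => nOm_x; case: seg_x => t t01 ftx.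
    apply: (no_bdry t); first by move: t01; rewrite set_itvE.
    by rewrite -/(f t) ftx; split => //; rewrite (interior_id Om).1.
have := f01 1; rewrite lexx ler01 -seg_sub => /(_ isT) [_].
by rewrite /f scale1r.
Qed.

Lemma edist_set_le x (S : set pt) y : S y -> edist_set x S <= enorm (x - y).
Proof.
move=> Sy; apply: ge_inf; last by exists y.
by exists 0 => _ [y' _ ->]; exact: enorm_ge0.
Qed.

Lemma edist_set_shift x w (S : set pt) :
  edist_set x S - enorm w <= edist_set (x + w) S.
Proof.
have [[y Sy]|S0] := pselect (exists y, S y); last first.
  have -> : S = set0 by apply/seteqP; split => // y Sy; apply: S0; exists y.
  have no_dist x' : [set r | exists2 y, set0 y & r = enorm (x' - y)] = set0.
    by apply/seteqP; split => // r [].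
  by rewrite /edist_set !no_dist lerBlDr lerDl enorm_ge0.
apply: lb_le_inf; first by exists (enorm (x + w - y)), y.
move=> _ [y' Sy' ->]; rewrite lerBlDr.
apply: le_trans (edist_set_le x Sy') _.
by have := enormD (x + w - y') (- w); rewrite enormN addrAC addrK.
Qed.

Lemma inner_set_shift Om z w eps h : open Om -> 0 < eps -> h <= eps ->
  enorm w = 1 -> inner_set Om (2 * eps) z -> inner_set Om h (z + eps *: w).
Proof.
move=> openOm eps_gt0 h_le w1 [Omz far_z]; have epsw : enorm (eps *: w) = eps.
  by rewrite enormZ w1 mulr1 gtr0_norm.
split.
  apply: open_segment_mem => // t /andP[t_ge0 t_le1] bdry_y.
  have := lt_le_trans far_z (edist_set_le z bdry_y).
  rewrite opprD addrA subrr sub0r enormN scalerA enormZ w1 mulr1.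
  rewrite ger0_norm ?mulr_ge0 ?(ltW eps_gt0) //; nra.
have := edist_set_shift z (eps *: w) (bdry Om); rewrite epsw; lra.
Qed.

End Domain.

Section Mesh.
Variables (R : realType) (d : nat).
Local Notation pt := 'rV[R]_d.
Implicit Types (x y : pt) (v : 'I_d.+1 -> pt).

Lemma chull_vertex v i : chull (range v) (v i).
Proof.
exists d.+1, v, (fun k => (k == i)%:R); split => [k|k||].
- by exists k.
- by rewrite ler0n.
- exact: sum_delta.
- by rewrite sum_deltaZ.
Qed.

Lemma chull_bary v x : chull (range v) x ->
  exists l : 'I_d.+1 -> R,
    [/\ forall i, 0 <= l i, \sum_i l i = 1 & x = \sum_i l i *: v i].
Proof.
move=> [n [p [l [p_vert l_ge0 l_sum1 ->]]]].
have /choice [f f_vert] : forall a, exists i, v i = p a.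
  by move=> a; case: (p_vert a) => i _ vi; exists i.
exists (fun i => \sum_(a | f a == i) l a); split.
- by move=> i; apply: sumr_ge0.
- by rewrite -l_sum1 (partition_big f predT).
rewrite (partition_big f predT) //=; apply: eq_bigr => i _.
by rewrite scaler_suml; apply: eq_bigr => a /eqP <-; rewrite f_vert.
Qed.

Lemma affine_indep_vertex_neq v i j : affine_indep v -> i != j -> v i != v j.
Proof.
move=> indep i_neq_j; apply/eqP => vij.
pose l k : R := (k == i)%:R - (k == j)%:R.
have l_sum0 : \sum_k l k = 0.
  by rewrite sumrB !sum_delta subrr.
have l_comb0 : \sum_k l k *: v k = 0.
  by rewrite /l (eq_bigr _ (fun k _ => scalerBl _ _ _)) sumrB !sum_deltaZ vij subrr.
have := indep l l_sum0 l_comb0 i.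
by rewrite /l eqxx (negbTE i_neq_j) subr0 => /eqP; rewrite oner_eq0.
Qed.

Lemma enorm_convex_comb_sub n (l : 'I_n -> R) (p : 'I_n -> pt) y :
  (forall i, 0 <= l i) -> \sum_i l i = 1 ->
  enorm (\sum_i l i *: p i - y) <= \sum_i l i * enorm (p i - y).
Proof.
move=> l_ge0 l_sum1.
rewrite convex_comb_subr //; apply: le_trans (enorm_sum _) _; apply: ler_sum => i _.
by rewrite enormZ ger0_norm.
Qed.

Lemma chull_dist_le v x y : chull (range v) x -> chull (range v) y ->
  enorm (x - y) <= \sum_i \sum_k enorm (v i - v k).
Proof.
move=> /chull_bary [l [l_ge0 l_sum1 ->]] /chull_bary [l' [l'_ge0 l'_sum1 ->]].
apply: le_trans (enorm_convex_comb_sub _ _ l_ge0 l_sum1) _.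
apply: convex_comb_le => // i; rewrite enorm_distC.
apply: le_trans (enorm_convex_comb_sub _ _ l'_ge0 l'_sum1) _.
apply: convex_comb_le => // k; rewrite enorm_distC.
have term_le_sum (I : finType) (F : I -> R) j :
    (forall i, 0 <= F i) -> F j <= \sum_i F i.
  by move=> F_ge0; rewrite (bigD1 j) //= lerDl sumr_ge0.
apply: le_trans (term_le_sum _ (fun i' => \sum_k' enorm (v i' - v k')) i _); last first.
  by move=> i'; apply: sumr_ge0 => k' _; exact: enorm_ge0.
by apply: term_le_sum => k'; exact: enorm_ge0.
Qed.

Lemma simplex_dist_le_diam v x y : simplex v x -> simplex v y ->
  enorm (x - y) <= diam_set (simplex v).
Proof.
move=> vx vy; apply: sup_upper_bound; last by exists x, y.
split; first by exists (enorm (x - y)), x, y.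
by exists (\sum_i \sum_k enorm (v i - v k)) => _ [x' [y' [vx' vy' ->]]]; exact: chull_dist_le.
Qed.

Lemma diam_le_meshsize m (M : 'I_m -> 'I_d.+1 -> pt) j :
  diam_set (simplex (M j)) <= meshsize M.
Proof. exact: le_bigmax. Qed.

Lemma meshsize_gt0 m (M : 'I_m -> 'I_d.+1 -> pt) (j : 'I_m) : (0 < d)%N ->
  is_mesh M -> 0 < meshsize M.
Proof.
move=> d_gt0 [indep _]; have ord0_neq_max : (ord0 : 'I_d.+1) != ord_max.
  by apply/eqP => /(congr1 val) /= d0; move: d_gt0; rewrite -d0.
apply: lt_le_trans (diam_le_meshsize M j).
apply: lt_le_trans (simplex_dist_le_diam (chull_vertex _ ord0) (chull_vertex _ ord_max)).
by rewrite enorm_gt0 // subr_eq0 affine_indep_vertex_neq.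
Qed.

Lemma stencil_in_mesh Om m (M : 'I_m -> 'I_d.+1 -> pt) h eps theta S z :
  open Om -> inner_set Om h `<=` mesh_domain M -> 0 < eps -> h <= eps ->
  theta_net theta S -> nodes M z -> inner_set Om (2 * eps) z ->
  forall x, x \in stencil eps S z -> exists j, simplex (M j) x.
Proof.
move=> openOm inner_sub eps_gt0 h_le [S_unit _ _] [j0 [i0 <-]] z_inner x.
rewrite in_cons => /orP [/eqP -> | /mapP [v vS ->]].
  by exists j0; exact: chull_vertex.
have := inner_set_shift openOm eps_gt0 h_le (S_unit v vS) z_inner.
by move=> /inner_sub /interior_subset [j _ ?]; exists j.
Qed.

End Mesh.

Section Interpolation.
Variables (R : realType) (d : nat) (A : 'M[R]_d) (b : 'rV[R]_d) (c : R).
Hypothesis symA : A^T = A.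
Local Notation pt := 'rV[R]_d.
Local Notation phi := (quad A b c).

Lemma quadD x y :
  phi (x + y) = phi x + dotp (x *m A + b) y + 2^-1 * dotp (y *m A) y.
Proof.
rewrite /quad mulmxDl !(dotpDl, dotpDr).
by rewrite [dotp (y *m A) x]dotp_mulmx_sym // [dotp y _]dotpC; field.
Qed.

(* The affine part of phi is reproduced exactly by convex combinations. *)
Lemma quad_convex_comb n (l : 'I_n -> R) (p : 'I_n -> pt) x :
  \sum_i l i = 1 -> x = \sum_i l i *: p i ->
  \sum_i l i * phi (p i) - phi x = 2^-1 * \sum_i l i * dotp ((p i - x) *m A) (p i - x).
Proof.
move=> l_sum1 x_comb; set g := x *m A + b.
have l_dotp0 : \sum_i l i * dotp g (p i - x) = 0.
  transitivity (dotp g (\sum_i l i *: (p i - x))).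
    by rewrite dotp_sumr; apply: eq_bigr => i _; rewrite dotpZr.
  by rewrite -convex_comb_subr // -x_comb subrr dotp0r.
rewrite (eq_bigr (fun i => phi x * l i + l i * dotp g (p i - x) +
   2^-1 * (l i * dotp ((p i - x) *m A) (p i - x)))); last first.
  by move=> i _; rewrite -{1}(subrK x (p i)) addrC quadD; ring.
by rewrite !big_split /= -!mulr_sumr l_sum1 l_dotp0; ring.
Qed.

Lemma quad_convex_comb_err n (l : 'I_n -> R) (p : 'I_n -> pt) x H :
  (forall i, 0 <= l i) -> \sum_i l i = 1 -> x = \sum_i l i *: p i ->
  (forall i, dotp (p i - x) (p i - x) <= H) ->
  `|\sum_i l i * phi (p i) - phi x| <= 2^-1 * mx_abs_sum A * H.
Proof.
move=> l_ge0 l_sum1 x_comb H_ge; rewrite quad_convex_comb // normrM.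
rewrite ger0_norm ?invr_ge0 ?ler0n // -mulrA ler_wpM2l ?invr_ge0 ?ler0n //.
apply: le_trans (ler_norm_sum _ _ _) _.
rewrite (eq_bigr (fun i => l i * `|dotp ((p i - x) *m A) (p i - x)|)); last first.
  by move=> i _; rewrite normrM ger0_norm.
apply: convex_comb_le => // i; apply: le_trans (abs_quad_form_le _ _) _.
by rewrite ler_wpM2l ?mx_abs_sum_ge0.
Qed.

(* [interp] picks an arbitrary barycentric representation of x; the bound
   holds for each of them. *)
Lemma interp_quad_err m (M : 'I_m -> 'I_d.+1 -> pt) x :
  (exists j, simplex (M j) x) ->
  `|interp M phi x - phi x| <= 2^-1 * mx_abs_sum A * meshsize M ^+ 2.
Proof.
move=> [j /chull_bary [l [l_ge0 l_sum1 x_comb]]].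
rewrite /interp; set P := [set y | _].
have : P (xget 0 P) by apply: xgetPex; exists (\sum_i l i * phi (M j i)), j, l.
move=> [j' [l' [l'_ge0 l'_sum1 x_comb' ->]]].
apply: quad_convex_comb_err => // i; rewrite -enorm_sqr.
have x_in : simplex (M j') x by exists d.+1, (M j'), l'; split => // k; exists k.
have := le_trans (simplex_dist_le_diam (chull_vertex (M j') i) x_in) (diam_le_meshsize M j').
by move=> dist_le; rewrite ler_pXn2r ?nnegrE ?enorm_ge0 // (le_trans _ dist_le) ?enorm_ge0.
Qed.

End Interpolation.

Section Stencil.
Variables (R : realType) (d : nat) (A : 'M[R]_d) (b : 'rV[R]_d) (c : R).
Hypotheses (d_gt0 : (0 < d)%N) (symA : A^T = A).
Local Notation pt := 'rV[R]_d.
Local Notation phi := (quad A b c).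
Local Notation lam := (lambda_max A).

Let quad_form_le_lam v : dotp (v *m A) v <= lam * dotp v v :=
  quad_form_le_lambda_max d_gt0 v symA.

Lemma quad_reflect z y : phi (z + y) + phi (z - y) = 2 * phi z + dotp (y *m A) y.
Proof.
by rewrite !quadD // mulNmx !(dotpNl, dotpNr); field.
Qed.

Lemma quad_crit xs y : xs *m A + b = 0 ->
  phi y = phi xs + 2^-1 * dotp ((y - xs) *m A) (y - xs).
Proof. by move=> crit; rewrite -{1}(subrK xs y) addrC quadD // crit dotp0l addr0. Qed.

Lemma quad_crit_strict_loc_max xs : lam < 0 -> xs *m A + b = 0 ->
  strict_loc_max phi xs.
Proof.
move=> lam_lt0 crit; exists 1 => // y /andP [y_near _].
rewrite (quad_crit y crit) gtrDl pmulr_rlt0 ?invr_gt0 ?ltr0n //.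
have y_neq : y - xs != 0 by apply: contraTneq y_near => ->; rewrite enorm0 ltxx.
apply: le_lt_trans (quad_form_le_lam _) _.
by rewrite pmulr_llt0 ?dotp_gt0.
Qed.

Lemma grad_norm_ge xs z eps : lam < 0 -> 0 < eps -> xs *m A + b = 0 ->
  eps <= enorm (xs - z) -> - lam * eps <= enorm (z *m A + b).
Proof.
move=> lam_lt0 eps_gt0 crit far; set u := xs - z.
have gE : z *m A + b = - (u *m A).
  have bE : b = - (xs *m A) by apply/eqP; rewrite -subr_eq0 opprK addrC crit.
  by rewrite /u mulmxBl opprB bE.
have u_gt0 : 0 < enorm u := lt_le_trans eps_gt0 far.
have grad_u : - lam * dotp u u <= dotp (z *m A + b) u.
  by rewrite gE dotpNl mulNr lerN2 quad_form_le_lam.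
have := le_trans grad_u (dotp_le_enorm _ _).
rewrite -enorm_sqr expr2 mulrA ler_pM2r // => /(le_trans _); apply.
by rewrite ler_wpM2l // oppr_ge0 ltW.
Qed.

Lemma quad_step_le z G v vt eps theta : lam < 0 -> 0 < eps -> theta <= 1 ->
  - lam * eps <= G -> z *m A + b = - G *: v ->
  enorm v = 1 -> enorm vt = 1 -> enorm (v - vt) <= theta ->
  phi (z + eps *: vt) <= phi z + lam * eps ^+ 2 + `|lam| * theta ^+ 2 * eps ^+ 2.
Proof.
move=> lam_lt0 eps_gt0 theta_le1 G_ge gE v1 vt1 v_near.
have nlam_ge0 : 0 <= - lam by rewrite oppr_ge0 ltW.
set E := enorm (v - vt) in v_near; have E_ge0 : 0 <= E := enorm_ge0 _.
have E2_le : E ^+ 2 <= theta ^+ 2 by rewrite ler_pXn2r ?nnegrE // (le_trans E_ge0).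
have q_le : dotp (vt *m A) vt <= lam.
  by have := quad_form_le_lam vt; rewrite -enorm_sqr vt1 expr1n mulr1.
rewrite quadD // dotpZr -scalemxAl dotpZl dotpZr gE dotpZl.
rewrite dotp_unit_vectors // -/E ltr0_norm //.
set F := 1 - E ^+ 2 / 2; have F_ge0 : 0 <= F.
  have : theta ^+ 2 <= 1 by rewrite expr_le1 // (le_trans E_ge0).
  rewrite /F; lra.
have grad_term : eps * ((- lam * eps) * F) <= eps * (G * F).
  by rewrite ler_wpM2l ?(ltW eps_gt0) // ler_wpM2r.
have curv_term : eps * (eps * dotp (vt *m A) vt) <= eps * (eps * lam).
  by rewrite !ler_wpM2l ?(ltW eps_gt0).
have curv_le0 : eps * (eps * lam) <= 0 by rewrite pmulr_rle0 // pmulr_rle0 // ltW.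
have dev_term : (- lam * (eps * eps)) * E ^+ 2 <= (- lam * (eps * eps)) * theta ^+ 2.
  by rewrite ler_wpM2l // !mulr_ge0 ?(ltW eps_gt0).
have dev_ge0 : 0 <= - lam * (eps * eps) * theta ^+ 2.
  by apply: mulr_ge0; rewrite ?sqr_ge0 // !mulr_ge0 ?(ltW eps_gt0).
rewrite /F !expr2 in grad_term dev_term dev_ge0 *; lra.
Qed.

Lemma stencil_descent z eps theta S : lam < 0 -> 0 < eps -> theta <= 1 ->
  theta_net theta S -> ~ (exists x, eball z eps x /\ strict_loc_max phi x) ->
  exists2 w, w \in S &
    phi (z + eps *: w) <= phi z + lam * eps ^+ 2 + `|lam| * theta ^+ 2 * eps ^+ 2.
Proof.
move=> lam_lt0 eps_gt0 theta_le1 [S_unit _ S_net] no_max.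
have unitA := lambda_max_lt0_unitmx d_gt0 symA lam_lt0.
set xs := - (b *m invmx A).
have crit : xs *m A + b = 0 by rewrite mulNmx mulmxKV // addNr.
have far : eps <= enorm (xs - z).
  rewrite leNgt; apply/negP => near; apply: no_max; exists xs.
  by split => //; exact: quad_crit_strict_loc_max.
set g := z *m A + b; set G := enorm g.
have G_ge : - lam * eps <= G := grad_norm_ge lam_lt0 eps_gt0 crit far.
have G_gt0 : 0 < G by apply: lt_le_trans G_ge; rewrite mulr_gt0 // oppr_gt0.
set v := (- G^-1) *: g.
have v1 : enorm v = 1.
  by rewrite enormZ normrN ger0_norm ?invr_ge0 ?(ltW G_gt0) // mulVf ?gt_eqF.
have gE : g = - G *: v by rewrite /v scalerA mulrNN mulfV ?gt_eqF // scale1r.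
have [vt vtS v_near] := S_net v v1.
exists vt => //.
exact: quad_step_le lam_lt0 eps_gt0 theta_le1 G_ge gE v1 (S_unit vt vtS) v_near.
Qed.

Lemma stencil_pair_le z eps theta S : 0 < eps -> theta <= 1 ->
  theta_net theta S -> ~ (exists x, eball z eps x /\ strict_loc_max phi x) ->
  forall x1, x1 \in stencil eps S z -> exists2 x2, x2 \in stencil eps S z &
    phi x1 + phi x2 <= 2 * phi z + lam * eps ^+ 2 + `|lam| * theta ^+ 2 * eps ^+ 2.
Proof.
move=> eps_gt0 theta_le1 S_net no_max x1; case: (S_net) => S_unit S_sym _.
have err_ge0 : 0 <= `|lam| * theta ^+ 2 * eps ^+ 2.
  by rewrite mulr_ge0 ?sqr_ge0 // mulr_ge0 ?sqr_ge0.
have stencil_mem w : w \in S -> z + eps *: w \in stencil eps S z.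
  by move=> wS; rewrite in_cons; apply/orP; right; apply/mapP; exists w.
rewrite in_cons => /orP [/eqP -> | /mapP [w wS ->]].
  have [lam_lt0|lam_ge0] := ltP lam 0.
    have [w wS descent] := stencil_descent lam_lt0 eps_gt0 theta_le1 S_net no_max.
    exists (z + eps *: w); first exact: stencil_mem.
    lra.
  exists z; first by rewrite in_cons eqxx.
  have : 0 <= lam * eps ^+ 2 by rewrite mulr_ge0 ?sqr_ge0.
  lra.
exists (z - eps *: w); first by rewrite -scalerN stencil_mem ?S_sym.
rewrite quad_reflect -scalemxAl dotpZl dotpZr.
have : dotp (w *m A) w <= lam.
  by have := quad_form_le_lam w; rewrite -enorm_sqr S_unit // expr1n mulr1.
have : 0 < eps ^+ 2 by rewrite exprn_gt0.
rewrite expr2; nra.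
Qed.

End Stencil.

Unset Implicit Arguments.
Set Strict Implicit.

Theorem lemma3p7 (R : realType) (d : nat) :
  (0 < d)%N ->
  forall A : 'M[R]_d, A^T = A ->
  forall sigma : R, 0 < sigma ->
  exists C : R,
  forall (Om : set 'rV[R]_d) (m : nat) (M : 'I_m -> 'I_d.+1 -> 'rV[R]_d)
         (h eps theta : R) (S : seq 'rV[R]_d) (z b : 'rV[R]_d) (c : R),
    bounded_domain_cont_bdry Om ->
    is_mesh M -> shape_regular sigma M -> h = meshsize M ->
    inner_set Om h `<=` mesh_domain M -> mesh_domain M `<=` Om ->
    h <= eps -> eps <= diam_set Om ->
    0 < theta -> theta <= 1 -> theta_net theta S ->
    nodes M z -> inner_set Om (2 * eps) z ->
    ~ (exists x, eball z eps x /\ strict_loc_max (quad A b c) x) ->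
    - lambda_max A - C * (h ^+ 2 / eps ^+ 2 + theta ^+ 2)
      <= neg_disc_inf_lap M eps S (quad A b c) z.
Proof.
move=> d_gt0 A symA sigma _; set lam := lambda_max A; set K := mx_abs_sum A.
exists (`|lam| + 2 * K).
move=> Om m M h eps theta S z b c [openOm _ _ _ _] mesh _ hE inner_sub _ h_le _
  _ theta_le1 S_net z_node z_inner no_max.
have h_gt0 : 0 < h by rewrite hE; case: z_node => j0 _; exact: meshsize_gt0 j0 d_gt0 mesh.
have eps_gt0 := lt_le_trans h_gt0 h_le.
have interp_close x : x \in stencil eps S z ->
    `|interp M (quad A b c) x - quad A b c x| <= 2^-1 * K * h ^+ 2.
  move=> x_st; rewrite hE; apply: interp_quad_err => //.
  exact: stencil_in_mesh openOm inner_sub eps_gt0 h_le S_net z_node z_inner x x_st.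
have maxmin_le := bigmax_add_bigmin_le (mem_head z _) interp_close
  (stencil_pair_le d_gt0 symA eps_gt0 theta_le1 S_net no_max).
have eps2_gt0 : 0 < eps ^+ 2 by rewrite exprn_gt0.
rewrite /neg_disc_inf_lap -(ler_pM2l eps2_gt0) mulrA mulfV ?gt_eqF // mul1r.
have -> : eps ^+ 2 * (- lam - (`|lam| + 2 * K) * (h ^+ 2 / eps ^+ 2 + theta ^+ 2)) =
    - lam * eps ^+ 2 - (`|lam| + 2 * K) * h ^+ 2
    - (`|lam| + 2 * K) * (theta ^+ 2 * eps ^+ 2).
  by field; rewrite gt_eqF.
have : 0 <= `|lam| * h ^+ 2 by rewrite mulr_ge0 ?sqr_ge0.
have : 0 <= K * h ^+ 2 by rewrite mulr_ge0 ?sqr_ge0 ?mx_abs_sum_ge0.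
have : 0 <= K * (theta ^+ 2 * eps ^+ 2).
  by rewrite mulr_ge0 ?mx_abs_sum_ge0 // mulr_ge0 ?sqr_ge0.
have KhE : K * h ^+ 2 = 2 * (2^-1 * K * h ^+ 2) by field.
move: maxmin_le KhE; rewrite -/lam -/K; set E := 2^-1 * K * h ^+ 2; lra.
Qed.
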